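(* For every conservative reaction network $(X,\mathscr{R})$ there exists an injective Lewis realization $x\mapsto\Gamma_x$, i.e. a Lewis realization in which distinct compounds $x\neq y$ are assigned non-isomorphic vertex-coloured multigraphs $\Gamma_x,\Gamma_y$.
   Context: A reaction network (RN) $(X,\mathscr{R})$ consists of a finite non-empty set $X$ of species and a finite non-empty set $\mathscr{R}$ of reactions. Each reaction $r$ is given by stoichiometric coefficients $s^-_{xr},s^+_{xr}\in\mathbb{N}_0$. The stoichiometric matrix $S\in\mathbb{Z}^{X\times\mathscr{R}}$ has entries $S_{xr}=s^+_{xr}-s^-_{xr}$. The paper assumes throughout that RNs are closed: every reaction $r$ has $x,y$ with $S_{xr}<0<S_{yr}$. The RN is conservative if there is $m\in\mathbb{R}^X$ with all entries positive and $m^\top S=0$. An sf-instance is a matrix $A\in\mathbb{N}_0^{\mathcal{A}\times X}$ ($\mathcal{A}$ a non-empty finite set) with every column nonzero and $AS=0$. An sf-realization is an sf-instance with $\operatorname{im}A^\top=\ker S^\top$. Given $\mathrm{val}:\mathcal{A}\to\mathbb{N}=\{1,2,\dots\}$, consider multigraphs (loops allowed) with vertex colouring $\alpha:V\to\mathcal{A}$. The degree $d(u)$ is the number of non-loop edge incidences at $u$ plus twice the number of loops at $u$. A Lewis instance assigns vertex-coloured multigraphs $\Gamma_x=(V_x,E_x,\alpha_x)$ to all $x\in X$ such that: - $d(u)=\mathrm{val}(\alpha_x(u))$ for all $u\in V_x$; - the matrix $A_{ax}=|\{u\in V_x:\alpha_x(u)=a\}|$ is an sf-instance. It is a Lewis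 realization if this $A$ is an sf-realization. *)

From HB Require Import structures.
From mathcomp Require Import all_boot all_order all_algebra.
From mathcomp Require Import reals.
Set Implicit Arguments. Unset Strict Implicit. Unset Printing Implicit Defensive.
Import Order.TTheory GRing.Theory Num.Theory.
Local Open Scope ring_scope.

(* Reaction network: species X (finType), reactions Rx (finType),
   stoichiometric coefficients sminus x r = s^-_{xr}, splus x r = s^+_{xr}. *)
Definition stoich (X Rx : finType) (sminus splus : X -> Rx -> nat)
  (x : X) (r : Rx) : int := (splus x r)%:Z - (sminus x r)%:Z.

Definition closed_RN (X Rx : finType) (sminus splus : X -> Rx -> nat) : Prop :=
  forall r : Rx, exists x y : X,
    stoich sminus splus x r < 0 /\ 0 < stoich sminus splus y r.

Definition conservative (R : realType) (X Rx : finType)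
  (sminus splus : X -> Rx -> nat) : Prop :=
  exists m : X -> R, (forall x, 0 < m x) /\
    forall r : Rx, \sum_(x : X) m x * (stoich sminus splus x r)%:~R = 0.

Definition sf_instance (X Rx : finType) (sminus splus : X -> Rx -> nat)
  (k : nat) (A : 'I_k -> X -> nat) : Prop :=
  (forall x : X, exists a : 'I_k, A a x != 0%N) /\
  (forall (a : 'I_k) (r : Rx),
     \sum_(x : X) (A a x)%:Z * stoich sminus splus x r = 0).

Definition sf_realization (R : realType) (X Rx : finType)
  (sminus splus : X -> Rx -> nat) (k : nat) (A : 'I_k -> X -> nat) : Prop :=
  sf_instance sminus splus A /\
  forall v : X -> R,
    (exists w : 'I_k -> R, forall x, v x = \sum_(a : 'I_k) w a * (A a x)%:R)
    <-> (forall r : Rx, \sum_(x : X) v x * (stoich sminus splus x r)%:~R = 0).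

(* Vertex-coloured multigraph (loops allowed) with colours in 'I_k:
   vertices 'I_nv, colouring col, and mult u v = number of edges between
   u and v (mult u u = number of loops at u), symmetric. *)
Record cmgraph (k : nat) := CMGraph {
  nv : nat;
  col : 'I_nv -> 'I_k;
  mult : 'I_nv -> 'I_nv -> nat;
  mult_sym : forall u v, mult u v = mult v u }.
Arguments nv {k} c.
Arguments col {k} c _.
Arguments mult {k} c _ _.

Definition deg (k : nat) (G : cmgraph k) (u : 'I_(nv G)) : nat :=
  (\sum_(v : 'I_(nv G) | v != u) mult G u v + 2 * mult G u u)%N.

Definition cmg_iso (k : nat) (G H : cmgraph k) : Prop :=
  exists f : 'I_(nv G) -> 'I_(nv H),
    bijective f /\ (forall u, col H (f u) = col G u) /\
    (forall u v, mult H (f u) (f v) = mult G u v).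

Definition lewis_matrix (k : nat) (X : finType) (G : X -> cmgraph k)
  (a : 'I_k) (x : X) : nat := #|[set u : 'I_(nv (G x)) | col (G x) u == a]|.

Definition lewis_instance (X Rx : finType) (sminus splus : X -> Rx -> nat)
  (k : nat) (val : 'I_k -> nat) (G : X -> cmgraph k) : Prop :=
  (forall (x : X) (u : 'I_(nv (G x))), deg u = val (col (G x) u)) /\
  sf_instance sminus splus (lewis_matrix G).

Definition lewis_realization (R : realType) (X Rx : finType)
  (sminus splus : X -> Rx -> nat)
  (k : nat) (val : 'I_k -> nat) (G : X -> cmgraph k) : Prop :=
  (forall (x : X) (u : 'I_(nv (G x))), deg u = val (col (G x) u)) /\
  sf_realization R sminus splus (lewis_matrix G).

(* The left kernel ker S^T of the stoichiometric matrix has an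
   integer basis K (clear the denominators of a rational basis), and
   conservativity yields a strictly positive integer kernel vector z (round a
   large multiple of a positive real one, expressed in the basis K). Adding a
   large multiple of z to every row of K makes it nonnegative, and together
   with z these rows form a nonnegative integer matrix A whose rows span
   ker S^T: an sf-realization. Doubling A, the compound x with rank i gets the
   multigraph whose vertices are its 2 A_{.x} coloured atoms, all of degree
   2 |X| made up by loops, except that the first two atoms are joined by 2 i
   parallel edges; the number of non-loop edges, an isomorphism invariant,
   recovers i and hence x. *)

From HB Require Import structures.
From mathcomp Require Import all_boot all_order all_algebra.
From mathcomp Require Import reals lra zify.
Set Implicit Arguments. Unset Strict Implicit. Unset Printing Implicit Defensive.
Import Order.TTheory GRing.Theory Num.Theory.
Local Open Scope ring_scope.

Lemma rat_mx_int_multiple (m n : nat) (M : 'M[rat]_(m, n)) :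
  exists (d : int) (Z : 'M[int]_(m, n)), 0 < d /\ map_mx intr Z = d%:~R *: M.
Proof.
pose d := \prod_(ij : 'I_m * 'I_n) denq (M ij.1 ij.2).
exists d, (\matrix_(i, j) (numq (M i j) *
   \prod_(ij : 'I_m * 'I_n | ij != (i, j)) denq (M ij.1 ij.2))).
split; first by apply: prodr_gt0 => ij _; apply: denq_gt0.
apply/matrixP => i j; rewrite !mxE /d [in RHS](bigD1 (i, j)) //=.
by rewrite !rmorphM /= numqE [RHS]mulrC mulrA.
Qed.

Lemma map_intr_mx_eq0 (R : numDomainType) (m n : nat) (A : 'M[int]_(m, n)) :
  (map_mx (intr : int -> R) A == 0) = (A == 0).
Proof.
apply/eqP/eqP => [/matrixP AR0|->]; last by rewrite map_mx0.
apply/matrixP => i j; have := AR0 i j; rewrite !mxE => /eqP.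
by rewrite intr_eq0 => /eqP.
Qed.

Lemma exists_nat_mul_gt (R : archiRealFieldType) (I : finType) (a c : I -> R) :
  (forall i, 0 < a i) -> exists N : nat, forall i, c i < N%:R * a i.
Proof.
move=> a_gt0; exists (Num.truncn (\sum_i `|c i| / a i)).+1 => i.
rewrite -ltr_pdivrMr //; apply: le_lt_trans (truncnS_gt _).
apply: (@le_trans _ _ (`|c i| / a i)).
  by rewrite ler_pM2r ?invr_gt0 // ler_norm.
rewrite (bigD1 i) //= lerDl sumr_ge0 // => j _.
exact: divr_ge0 (normr_ge0 _) (ltW (a_gt0 j)).
Qed.

Section IntLeftKernel.

Variables (R : realType) (m p : nat) (S : 'M[int]_(m, p)).

Lemma int_left_kernel_basis :
  exists K : 'M[int]_m, K *m S = 0 /\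
    forall v : 'rV[R]_m, v *m map_mx intr S = 0 ->
      exists w : 'rV[R]_m, v = w *m map_mx intr K.
Proof.
pose SQ := map_mx (intr : int -> rat) S.
have [d [K [d_gt0 KE]]] := rat_mx_int_multiple (kermx SQ).
have dQ_neq0 : d%:~R != 0 :> rat by rewrite intr_eq0 gt_eqF.
exists K; split.
  apply/eqP; rewrite -(map_intr_mx_eq0 rat) map_mxM KE -scalemxAl mulmx_ker.
  by rewrite scaler0.
move=> v vS.
have SR : map_mx intr S = map_mx (@ratr R) SQ.
  by rewrite -map_mx_comp; apply: eq_map_mx => z /=; rewrite ratr_int.
have kerE : map_mx (@ratr R) (kermx SQ) = (d%:~R)^-1 *: map_mx intr K.
  have -> : kermx SQ = (d%:~R)^-1 *: map_mx intr K.
    by rewrite KE scalerA mulVf ?scale1r.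
  rewrite map_mxZ fmorphV /= ratr_int -map_mx_comp; congr (_ *: _).
  by apply: eq_map_mx => z; rewrite /= ratr_int.
have : (v <= kermx (map_mx (@ratr R) SQ))%MS by rewrite -SR; apply/sub_kermxP.
rewrite -map_kermx kerE => /submxP [D ->].
by exists ((d%:~R)^-1 *: D); rewrite -scalemxAr scalemxAl.
Qed.

Lemma pos_int_left_kernel_vector (mv : 'rV[R]_m) :
  (forall j, 0 < mv 0 j) -> mv *m map_mx intr S = 0 ->
  exists z : 'rV[int]_m, (forall j, 0 < z 0 j) /\ z *m S = 0.
Proof.
move=> mv_gt0 mvS.
have [K [KS Kspan]] := int_left_kernel_basis.
have [w mvE] := Kspan _ mvS.
pose KR := map_mx (intr : int -> R) K.
have [N mv_big] := exists_nat_mul_gt (fun j => \sum_i `|KR i j|) mv_gt0.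
(* Rounding N w down changes entry j of N mv by at most sum_i |K i j|, which
   N was chosen to beat. *)
pose wN := N%:R *: w.
exists (map_mx Num.floor wN *m K); split; last by rewrite -mulmxA KS mulmx0.
move=> j; rewrite -(ltr0z R).
have rounding_err : (wN *m KR) 0 j - ((map_mx Num.floor wN *m K) 0 j)%:~R
    <= \sum_i `|KR i j|.
  rewrite !mxE rmorph_sum -sumrB; apply: ler_sum => i _.
  rewrite !mxE rmorphM /= -mulrBl; apply: le_trans (ler_norm _) _.
  rewrite normrM ler_piMl // ger0_norm ?subr_ge0 ?floor_le //.
  by have := floorD1_gt (N%:R * w 0 i); rewrite intrD; lra.
have : (wN *m KR) 0 j = N%:R * mv 0 j by rewrite -scalemxAl -mvE mxE.
by have := mv_big j; lra.
Qed.

Lemma nonneg_int_left_kernel_basis (mv : 'rV[R]_m) :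
  (forall j, 0 < mv 0 j) -> mv *m map_mx intr S = 0 ->
  exists Z : 'M[int]_(1 + m, m),
    [/\ forall a j, 0 <= Z a j, forall j, exists a, 0 < Z a j, Z *m S = 0 &
        forall v : 'rV[R]_m, v *m map_mx intr S = 0 ->
          exists w : 'rV[R]_(1 + m), v = w *m map_mx intr Z].
Proof.
move=> mv_gt0 mvS.
have [K [KS Kspan]] := int_left_kernel_basis.
have [z [z_gt0 zS]] := pos_int_left_kernel_vector mv_gt0 mvS.
(* Shifting each row of K by T z makes it nonnegative; the extra row z keeps
   the span. *)
pose T : int := \sum_(ij : 'I_m * 'I_m) `|K ij.1 ij.2|.
exists (col_mx z (K + const_mx T *m z)); split.
- move=> a j; rewrite -(splitK a); case: (split a) => i /=.
    by rewrite col_mxEu ord1; apply/ltW/z_gt0.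
  rewrite col_mxEd !mxE big_ord1 mxE.
  have K_le_T : `|K i j| <= T by rewrite /T (bigD1 (i, j)) //= lerDl sumr_ge0.
  have T_ge0 : 0 <= T := le_trans (normr_ge0 _) K_le_T.
  have : T <= T * z ord0 j by rewrite ler_peMr // -gtz0_ge1; apply: z_gt0.
  have := ler_norm (- K i j); rewrite normrN.
  lra.
- by move=> j; exists (lshift m ord0); rewrite col_mxEu z_gt0.
- by rewrite mul_col_mx mulmxDl -mulmxA zS mulmx0 addr0 KS col_mx0.
move=> v /Kspan [w ->].
exists (row_mx (- (w *m const_mx T%:~R)) w).
rewrite map_col_mx mul_row_col map_mxD map_mxM map_const_mx.
by rewrite mulmxDr mulmxA mulNmx addrCA addNr addr0.
Qed.

End IntLeftKernel.

Section StoichiometricMatrix.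

Variables (R : realType) (X Rx : finType) (sminus splus : X -> Rx -> nat).

Definition stoich_mx : 'M[int]_(#|X|, #|Rx|) :=
  \matrix_(i, j) stoich sminus splus (enum_val i) (enum_val j).

Lemma stoich_mx_left_kernel (v : X -> R) :
  (forall r, \sum_x v x * (stoich sminus splus x r)%:~R = 0) ->
  \row_i v (enum_val i) *m map_mx intr stoich_mx = 0.
Proof.
move=> vS; apply/matrixP => i j; rewrite !mxE -[RHS](vS (enum_val j)).
rewrite [RHS](big_enum_val (A := predT)); apply: eq_bigr => k _.
by rewrite !mxE.
Qed.

Lemma conservative_stoich_mx : conservative R sminus splus ->
  exists mv : 'rV[R]_#|X|,
    (forall j, 0 < mv 0 j) /\ mv *m map_mx intr stoich_mx = 0.
Proof.
move=> [m [m_gt0 mS]]; exists (\row_i m (enum_val i)).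
by split=> [j|]; [rewrite mxE | apply: stoich_mx_left_kernel].
Qed.

Lemma sf_instance_span_ker (k : nat) (A : 'I_k -> X -> nat) (v : X -> R) :
  sf_instance sminus splus A ->
  (exists w : 'I_k -> R, forall x, v x = \sum_a w a * (A a x)%:R) ->
  forall r, \sum_x v x * (stoich sminus splus x r)%:~R = 0.
Proof.
move=> [_ AS] [w vE] r; under eq_bigr do rewrite vE mulr_suml.
rewrite exchange_big big1 //= => a _.
have := congr1 (fun z : int => w a * z%:~R) (AS a r).
rewrite mulr0 rmorph_sum mulr_sumr => sum0; rewrite -[RHS]sum0.
apply: eq_bigr => x _.
by rewrite rmorphM /= mulrA.
Qed.

Lemma sf_realization_scale (k c : nat) (A B : 'I_k -> X -> nat) :
  (0 < c)%N -> (forall a x, B a x = c * A a x)%N ->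
  sf_realization R sminus splus A -> sf_realization R sminus splus B.
Proof.
move=> c_gt0 BE [[A_col AS] Aspan].
have Binst : sf_instance sminus splus B.
  split=> [x | a r].
    by have [a Aa] := A_col x; exists a; rewrite BE muln_eq0 negb_or -lt0n c_gt0.
  rewrite -[RHS](mulr0 c%:Z) -[X in _ = _ * X](AS a r) mulr_sumr.
  apply: eq_bigr => x _.
  by rewrite BE PoszM mulrA.
split=> // v; split; first exact: sf_instance_span_ker.
move=> /Aspan [w vE]; exists (fun a => w a / c%:R) => x; rewrite vE.
apply: eq_bigr => a _; rewrite BE natrM mulrA divfK //.
by rewrite pnatr_eq0 -lt0n.
Qed.

Lemma sf_realization_of_int_mx (k : nat) (Z : 'M[int]_(k, #|X|)) :
  (forall a j, 0 <= Z a j) -> (forall j, exists a, 0 < Z a j) ->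
  Z *m stoich_mx = 0 ->
  (forall v : 'rV[R]_#|X|, v *m map_mx intr stoich_mx = 0 ->
     exists w : 'rV[R]_k, v = w *m map_mx intr Z) ->
  sf_realization R sminus splus (fun a x => `|Z a (enum_rank x)|%N).
Proof.
move=> Z_ge0 Z_col ZS Zspan.
have Zinst : sf_instance sminus splus (fun a x => `|Z a (enum_rank x)|%N).
  split=> [x | a r].
    by have [a Za] := Z_col (enum_rank x); exists a; rewrite absz_eq0 gt_eqF.
  transitivity ((Z *m stoich_mx) a (enum_rank r)); last by rewrite ZS mxE.
  rewrite mxE (big_enum_val (A := predT)); apply: eq_bigr => i _.
  by rewrite mxE gez0_abs ?enum_valK ?enum_rankK.
split=> // v; split; first exact: sf_instance_span_ker.
move=> /stoich_mx_left_kernel /Zspan [w vE]; exists (w 0) => x.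
have := congr1 (fun M : 'rV[R]_#|X| => M 0 (enum_rank x)) vE.
rewrite !mxE enum_rankK => ->.
by apply: eq_bigr => a _; rewrite mxE natr_absz ger0_norm.
Qed.

End StoichiometricMatrix.

Section Gadget.

Variable k : nat.

(* Vertices 0 and 1 are joined by 2 i parallel edges and carry M - i loops,
   every other vertex carries M loops: all degrees are 2 M, and i is read off
   the non-loop edges. *)
Definition gadget_mult (n M i : nat) (u v : 'I_n) : nat :=
  if u == v then (if (u < 2)%N then M - i else M)%N
  else if (u + v == 1)%N then (2 * i)%N else 0%N.

Lemma gadget_mult_sym (n M i : nat) (u v : 'I_n) :
  gadget_mult M i u v = gadget_mult M i v u.
Proof. by rewrite /gadget_mult eq_sym addnC; case: eqP => [->|]. Qed.

Lemma gadget_mult_offdiag (n M i : nat) (u : 'I_n) : (2 <= n)%N ->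
  (\sum_(v | v != u) gadget_mult M i u v = if (u < 2)%N then 2 * i else 0)%N.
Proof.
move=> n_ge2; case: ltnP => u_small; last first.
  rewrite big1 // => v vu; rewrite /gadget_mult eq_sym (negbTE vu).
  by case: ifP => // /eqP; lia.
have u'_lt : (1 - u < n)%N by lia.
have u'_neq : Ordinal u'_lt != u by apply/eqP => /(congr1 val) /=; lia.
rewrite (bigD1 (Ordinal u'_lt)) //= big1 ?addn0 => [|v /andP [vu vu']].
  by rewrite /gadget_mult eq_sym (negbTE u'_neq) /=; case: ifP => // /eqP; lia.
rewrite /gadget_mult eq_sym (negbTE vu); case: ifP => // /eqP uv1.
by case/eqP: vu'; apply: val_inj => /=; lia.
Qed.

Definition gadget (s : seq 'I_k) (M i : nat) : cmgraph k :=
  CMGraph (tnth (in_tuple s)) (@gadget_mult_sym (size s) M i).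

Lemma deg_gadget (s : seq 'I_k) (M i : nat) (u : 'I_(nv (gadget s M i))) :
  (2 <= size s)%N -> (i <= M)%N -> deg u = (2 * M)%N.
Proof.
move=> s_ge2 i_le; rewrite /deg /= gadget_mult_offdiag // /gadget_mult eqxx.
by case: ifP => _; lia.
Qed.

Lemma lewis_matrix_gadget (X : finType) (s : X -> seq 'I_k) (M : nat)
    (i : X -> nat) (a : 'I_k) (x : X) :
  lewis_matrix (fun x => gadget (s x) M (i x)) a x = count_mem a (s x).
Proof.
rewrite /lewis_matrix /= -sum1_count (big_nth a) big_mkord -sum1_card.
by apply: eq_bigl => u; rewrite inE (tnth_nth a).
Qed.

Definition nonloop_incidences (G : cmgraph k) : nat :=
  (\sum_u \sum_(v | v != u) mult G u v)%N.

Lemma nonloop_incidences_gadget (s : seq 'I_k) (M i : nat) :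
  (2 <= size s)%N -> nonloop_incidences (gadget s M i) = (4 * i)%N.
Proof.
move=> s_ge2; rewrite /nonloop_incidences /=.
under eq_bigr do rewrite gadget_mult_offdiag //.
rewrite -big_mkcond -(big_ord_widen _ (fun _ => 2 * i)%N s_ge2).
by rewrite big_const_ord /=; lia.
Qed.

Lemma cmg_iso_nonloop_incidences (G H : cmgraph k) :
  cmg_iso G H -> nonloop_incidences G = nonloop_incidences H.
Proof.
move=> [f [f_bij [_ f_mult]]].
have f_inj := bij_inj f_bij.
rewrite /nonloop_incidences (reindex f) /=; last exact: onW_bij.
apply: eq_bigr => u _; rewrite (reindex f) /=; last exact: onW_bij.
by apply: eq_big => [v|v _]; rewrite ?(inj_eq f_inj) ?f_mult.
Qed.

Definition colour_seq (A : 'I_k -> nat) : seq 'I_k :=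
  flatten [seq nseq (A a) a | a <- enum 'I_k].

Lemma count_mem_colour_seq (A : 'I_k -> nat) (a : 'I_k) :
  count_mem a (colour_seq A) = A a.
Proof.
rewrite count_flatten -map_comp sumnE big_map big_enum /= (bigD1 a) //=.
rewrite count_nseq /= eqxx mul1n big1 ?addn0 // => b ba.
by rewrite count_nseq /= (negbTE ba).
Qed.

End Gadget.

Unset Implicit Arguments.

Theorem proposition14 (R : realType) (X Rx : finType)
  (sminus splus : X -> Rx -> nat) :
  (0 < #|X|)%N -> (0 < #|Rx|)%N ->
  closed_RN sminus splus ->
  conservative R sminus splus ->
  exists (k : nat) (val : 'I_k -> nat) (G : X -> cmgraph k),
    (0 < k)%N /\ (forall a, 0 < val a)%N /\
    lewis_realization R sminus splus val G /\
    (forall x y : X, x != y -> ~ cmg_iso (G x) (G y)).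
Proof.
move=> X_gt0 _ _ /conservative_stoich_mx [mv [mv_gt0 mvS]].
have [Z [Z_ge0 Z_col ZS Zspan]] := nonneg_int_left_kernel_basis mv_gt0 mvS.
pose A a x := `|Z a (enum_rank x)|%N.
(* Doubling A gives every graph the two vertices the gadget needs. *)
pose G x := gadget (colour_seq (fun a => 2 * A a x)%N) #|X| (enum_rank x).
have G_size x : (2 <= size (colour_seq (fun a => 2 * A a x)%N))%N.
  have [a Za] := Z_col (enum_rank x).
  apply: leq_trans (count_size (pred1 a) _); rewrite count_mem_colour_seq.
  have : (0 < A a x)%N by rewrite absz_gt0 gt_eqF.
  lia.
exists (1 + #|X|)%N, (fun _ => 2 * #|X|)%N, G; split=> //.
split=> [_|]; first by rewrite muln_gt0.
split; last first.
  move=> x y xy /cmg_iso_nonloop_incidences.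
  rewrite !nonloop_incidences_gadget // => /eqP; rewrite eqn_mul2l /=.
  by move=> /eqP /val_inj /enum_rank_inj eq_xy; rewrite eq_xy eqxx in xy.
split=> [x u|]; first by apply: deg_gadget => //; apply/ltnW/ltn_ord.
apply: (sf_realization_scale (c := 2) (A := A)) => // [a x|].
  by rewrite lewis_matrix_gadget count_mem_colour_seq.
exact: sf_realization_of_int_mx.
Qed.
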